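(* For any $\epsilon>0$ there is a $c'>0$ such that for all $n'$ and any $1\le R\le n'$, the probability that a matrix $Z$ chosen uniformly at random from the rank-$R$ matrices in $\mathbb{Z}_D^{n'\times n'}$ has all row and column weights at most $c'n'$ is $O(1)\cdot D^{R^2-2(1-\epsilon)n'R}$.
   Context: $D$ is an odd prime and $\mathbb{Z}_D$ the field with $D$ elements. The weight of a row or column is its number of nonzero entries. *)

From mathcomp Require Import all_boot all_order all_algebra.
From Stdlib Require Import Reals.
Set Implicit Arguments. Unset Strict Implicit. Unset Printing Implicit Defensive.
Import GRing.Theory.

Definition row_weight (D n : nat) (Z : 'M['F_D]_n) (i : 'I_n) : nat :=
  #|[set j : 'I_n | Z i j != GRing.zero]|.
Definition col_weight (D n : nat) (Z : 'M['F_D]_n) (j : 'I_n) : nat :=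
  #|[set i : 'I_n | Z i j != GRing.zero]|.

Definition Rleb (x y : R) : bool := if Rle_dec x y then true else false.

Definition weights_le (D n : nat) (Z : 'M['F_D]_n) (w : R) : bool :=
  [forall i : 'I_n, Rleb (INR (row_weight Z i)) w] &&
  [forall j : 'I_n, Rleb (INR (col_weight Z j)) w].

Definition prob_low_weight (D n r : nat) (w : R) : R :=
  (INR #|[pred Z : 'M['F_D]_n | (\rank Z == r) && weights_le Z w]|
   / INR #|[pred Z : 'M['F_D]_n | \rank Z == r]|)%R.

From mathcomp Require Import all_boot all_order all_algebra.
From Stdlib Require Import Reals.
From mathcomp Require Import all_fingroup zify.
From Stdlib Require Import Lra.

(* A rank-[r] matrix [Z] is recovered as [C M^-1 R] from an invertible [r x r] minor [M], the
   [r] rows [R] and the [r] columns [C] of [Z] through it.  If all rows and columns of [Z] have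
   weight at most [w], this leaves at most [(n^2 |L|^2)^r] choices, where [L] is the set of
   vectors of weight at most [w].  Weighting every vector [v] by [m^(n - wt v)] gives
   [|L| m^(n - w) <= (m + q - 1)^n], so that [|L| <= q^(eps n / 2)] for [m] large and [w = c' n]
   with [c'] small.  On the other side, the matrices [[1; Y] M [1 X]] with [M] invertible are
   pairwise distinct of rank [r], and there are at least [q^(2nr - r^2 - r)] of them.  The
   probability is thus at most [(q n^2 q^(eps n))^r q^(r^2 - 2nr)], which is the claimed bound
   once [q n^2 <= q^(eps n)]; the finitely many smaller [n] go into the constant. *)

Set Implicit Arguments. Unset Strict Implicit. Unset Printing Implicit Defensive.
Import GRing.Theory.
Local Notation "m ^ n" := (expn m n) : nat_scope.

Lemma prod_indicator_set (I : finType) (S : {set I}) (m : nat) :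
  \prod_(i : I) (if i \in S then 1 else m) = m ^ (#|I| - #|S|).
Proof.
rewrite (bigID (mem S)) /= big1 ?mul1n => [|i ->] //.
rewrite (eq_bigr (fun=> m)) => [|i /negPf ->] //.
rewrite prod_nat_const; congr (_ ^ _).
by rewrite -(cardC S) addKn; apply: eq_card => i; rewrite !inE.
Qed.

Section LowWeightVectors.
Variables (F : finFieldType) (n : nat).
Local Open Scope ring_scope.

Definition weight (v : 'rV[F]_n) : nat := #|[set j | v ord0 j != 0]|.

Lemma weight_le_dim (v : 'rV[F]_n) : (weight v <= n)%nat.
Proof. by rewrite /weight -[X in (_ <= X)%nat]card_ord max_card. Qed.

Lemma sum_expn_zero_entries (m : nat) :
  (\sum_(v : 'rV[F]_n) m ^ (n - weight v) = (m + #|F|.-1) ^ n)%nat.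
Proof.
pose h (f : {ffun 'I_n -> F}) : 'rV[F]_n := \row_j f j.
have h_bij : bijective h.
  exists (fun v : 'rV[F]_n => [ffun j => v ord0 j]).
    by move=> f; apply/ffunP => j; rewrite ffunE mxE.
  by move=> v; apply/rowP => j; rewrite mxE ffunE.
rewrite (reindex h) /=; last exact: onW_bij.
under eq_bigr => f _.
  rewrite -[X in (X - _)%nat]card_ord -prod_indicator_set.
  under eq_bigr do rewrite inE mxE.
  over.
rewrite -(bigA_distr_bigA (fun j (x : F) => if x != 0 then 1%nat else m)) /=.
rewrite -[n in RHS]card_ord -prod_nat_const; apply: eq_bigr => j _.
rewrite (bigD1 0) //= eqxx; congr (_ + _)%nat.
rewrite (eq_bigr (fun _ => 1%nat)) => [|x ->] //.
rewrite sum_nat_const muln1 -(cardC1 (0 : F)).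
by apply: eq_card => x; rewrite !inE.
Qed.

Lemma card_low_weight_le (m k : nat) : (0 < m)%nat ->
  (#|[set v : 'rV[F]_n | weight v <= k]| * m ^ n <= m ^ k * (m + #|F|.-1) ^ n)%nat.
Proof.
move=> m_gt0; rewrite -sum_expn_zero_entries big_distrr /= -sum_nat_const.
rewrite [X in (_ <= X)%nat](bigID (mem [set v | (weight v <= k)%nat])) /=.
apply: leq_trans (leq_addr _ _); apply: leq_sum => v; rewrite inE => wt_v.
by rewrite -expnD leq_pexp2l //; have := weight_le_dim v; lia.
Qed.

End LowWeightVectors.

Section UnitMinor.
Variable F : fieldType.
Local Open Scope ring_scope.

Lemma rank_colsub_le m n p (g : 'I_p -> 'I_n) (A : 'M[F]_(m, n)) :
  (\rank (colsub g A) <= \rank A)%nat.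
Proof.
have -> : colsub g A = A *m colsub g 1%:M by rewrite mulmx_colsub mulmx1.
exact: mxrankM_maxl.
Qed.

Lemma exists_unit_minor m n r (Z : 'M[F]_(m, n)) : \rank Z = r ->
  exists (f : {ffun 'I_r -> 'I_m}) (g : {ffun 'I_r -> 'I_n}),
    colsub g (rowsub f Z) \in unitmx.
Proof.
move=> <-; set f := maxrankfun Z.
have rankR : \rank (rowsub f Z) = \rank Z by apply/eqP; exact: maxrowsub_free.
have fullRt : row_full (rowsub f Z)^T by rewrite /row_full mxrank_tr rankR.
exists f, (fullrankfun fullRt); rewrite -unitmx_tr.
have -> : (colsub (fullrankfun fullRt) (rowsub f Z))^T =
          rowsub (fullrankfun fullRt) (rowsub f Z)^T by apply/matrixP => i j; rewrite !mxE.
exact: fullrowsub_unit.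
Qed.

(* The r rows through a unit r x r minor of a rank r matrix span its row space. *)
Lemma unit_minor_factor m n r (Z : 'M[F]_(m, n)) (f : 'I_r -> 'I_m) (g : 'I_r -> 'I_n) :
  \rank Z = r -> colsub g (rowsub f Z) \in unitmx ->
  Z = colsub g Z *m invmx (colsub g (rowsub f Z)) *m rowsub f Z.
Proof.
move=> rankZ unitM.
have rankR : \rank (rowsub f Z) = r.
  apply/eqP; rewrite eqn_leq rank_leq_row -{1}(mxrank_unit unitM).
  exact: rank_colsub_le.
have /submxP[X defZ] : (Z <= rowsub f Z)%MS.
  by have := mxrank_leqif_sup (rowsub_sub f Z); rewrite rankZ rankR => /leqif_refl.
by rewrite {2}defZ -mulmx_colsub mulmxK // -defZ.
Qed.

End UnitMinor.

Section RankNumerator.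
Variables (F : finFieldType) (n r : nat).
Local Open Scope ring_scope.

Definition minor_data := (({ffun 'I_r -> 'I_n} * {ffun 'I_r -> 'I_n}) *
                         ({ffun 'I_r -> 'rV[F]_n} * {ffun 'I_r -> 'rV[F]_n}))%type.

Definition minor_decode (p : minor_data) : 'M[F]_n :=
  let R := \matrix_(i < r) p.2.1 i in
  (\matrix_(j < r) p.2.2 j)^T *m invmx (colsub p.1.2 R) *m R.

Lemma minor_decodeK (Z : 'M[F]_n) (f g : {ffun 'I_r -> 'I_n}) :
  \rank Z = r -> colsub g (rowsub f Z) \in unitmx ->
  minor_decode ((f, g), ([ffun i => row (f i) Z], [ffun j => (col (g j) Z)^T])) = Z.
Proof.
move=> rankZ unitM; rewrite /minor_decode /=.
set C := (\matrix_(j < r) _)^T; set R := \matrix_(i < r) _.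
have -> : R = rowsub f Z by apply/matrixP => i j; rewrite !mxE ffunE mxE.
have -> : C = colsub g Z by apply/matrixP => i j; rewrite !mxE ffunE !mxE.
by rewrite -unit_minor_factor.
Qed.

Lemma card_rank_weight_le (P : pred nat) :
  (#|[pred Z : 'M[F]_n | (\rank Z == r) &&
      ([forall i, P (weight (row i Z))] && [forall j, P (weight (col j Z)^T)])]|
   <= (n ^ 2 * #|[set v : 'rV[F]_n | P (weight v)]| ^ 2) ^ r)%nat.
Proof.
set LW := [set v : 'rV[F]_n | P (weight v)].
pose LWs := [set fv : {ffun 'I_r -> 'rV[F]_n} | fv \in ffun_on (mem LW)].
pose B : {set minor_data} := setX setT (setX LWs LWs).
have cardB : #|B| = ((n ^ 2 * #|LW| ^ 2) ^ r)%nat.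
  rewrite !cardsX cardsT !cardsE card_prod !card_ffun !card_ffun_on !card_ord.
  by rewrite /LW cardsE expnMn -!expnM -!expnD addnn mul2n.
rewrite -cardB; apply: leq_trans (leq_imset_card minor_decode B).
apply: subset_leq_card; apply/subsetP => Z.
rewrite inE => /and3P[/eqP rankZ /forallP lwR /forallP lwC].
have [f [g unitM]] := exists_unit_minor rankZ.
apply/imsetP; exists ((f, g), ([ffun i => row (f i) Z], [ffun j => (col (g j) Z)^T])).
  by rewrite !inE /=; apply/andP; split; apply/forallP => i; rewrite ffunE inE.
by rewrite minor_decodeK.
Qed.

End RankNumerator.

Lemma prod_expn_pred_ge (q r : nat) : 1 < q ->
  q ^ 'C(r, 2) <= \prod_(1 <= i < r.+1) (q ^ i - 1).
Proof.
move=> q_gt1; elim: r => [|r IH]; first by rewrite big_geq.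
rewrite big_nat_recr //= binS bin1 expnD leq_mul // expnS.
have : 0 < q ^ r by rewrite expn_gt0 ltnW.
by move: (q ^ r) => x; nia.
Qed.

Lemma bin2_double (r : nat) : 'C(r, 2) + 'C(r, 2) = r * r.-1.
Proof. by elim: r => // r IH; rewrite binS bin1; nia. Qed.

Section RankDenominator.
Variables (F : finFieldType) (r s : nat).
Local Open Scope ring_scope.

Definition bordered_mx (p : 'M[F]_r * ('M[F]_(r, s) * 'M[F]_(s, r))) : 'M[F]_(r + s) :=
  col_mx 1%:M p.2.2 *m p.1 *m row_mx 1%:M p.2.1.

Lemma bordered_mx_corner M X Y :
  row_mx 1%:M 0 *m bordered_mx (M, (X, Y)) *m col_mx 1%:M 0 = M.
Proof.
rewrite /bordered_mx /= !mulmxA mul_row_col mul1mx mul0mx addr0.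
by rewrite -mulmxA mul_row_col mulmx0 addr0 !mul1mx mulmx1.
Qed.

Lemma rank_bordered_mx M X Y : M \in unitmx -> \rank (bordered_mx (M, (X, Y))) = r.
Proof.
move=> unitM; apply/eqP; rewrite eqn_leq; apply/andP; split.
  by rewrite /bordered_mx (leq_trans (mxrankM_maxr _ _)) // rank_leq_row.
rewrite -{1}(mxrank_unit unitM) -{1}(bordered_mx_corner M X Y).
by rewrite (leq_trans (mxrankM_maxl _ _)) // mxrankM_maxr.
Qed.

Lemma bordered_mx_inj : {in [set p | p.1 \in unitmx] &, injective bordered_mx}.
Proof.
move=> [M [X Y]] [M' [X' Y']]; rewrite !inE /= => unitM _ eqB.
have eqM : M = M' by rewrite -(bordered_mx_corner M X Y) eqB bordered_mx_corner.
subst M'.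
have eqX : row_mx 1%:M X = row_mx 1%:M X' :> 'M_(r, r + s).
  move/(congr1 (mulmx (row_mx 1%:M 0))): eqB.
  rewrite /bordered_mx /= !mulmxA !mul_row_col !mul1mx !mul0mx !addr0.
  by move/(congr1 (mulmx (invmx M))); rewrite !mulmxA mulmx1 mulVmx // !mul1mx.
have eqY : col_mx 1%:M Y = col_mx 1%:M Y' :> 'M_(r + s, r).
  move/(congr1 (mulmx^~ (col_mx 1%:M 0))): eqB.
  rewrite /bordered_mx /= -!mulmxA !mul_row_col !mulmx1 !mulmx0 !addr0 !mulmx1.
  by move/(congr1 (mulmx^~ (invmx M))); rewrite -!mulmxA mulmxV // !mulmx1.
by case/eq_row_mx: eqX => _ ->; case/eq_col_mx: eqY => _ ->.
Qed.

Lemma card_rank_ge_unitmx :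
  (#|[set M : 'M[F]_r | M \in unitmx]| * (#|F| ^ (r * s)) ^ 2
   <= #|[pred Z : 'M[F]_(r + s) | \rank Z == r]|)%nat.
Proof.
pose dom := [set p : 'M[F]_r * ('M[F]_(r, s) * 'M[F]_(s, r)) | p.1 \in unitmx].
have -> : (#|[set M : 'M[F]_r | M \in unitmx]| * (#|F| ^ (r * s)) ^ 2)%nat = #|dom|.
  rewrite (_ : dom = setX [set M | M \in unitmx] setT); last first.
    by apply/setP => -[M XY]; rewrite !inE andbT.
  by rewrite cardsX cardsT card_prod !card_mx (mulnC s r) mulnn.
rewrite /dom -(card_in_imset bordered_mx_inj); apply: subset_leq_card.
by apply/subsetP => _ /imsetP[[M [X Y]] + ->]; rewrite !inE /= => /rank_bordered_mx ->.
Qed.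

Lemma card_unitmx_ge : (0 < r)%nat ->
  (#|F| ^ (r * r.-1) <= #|[set M : 'M[F]_r | M \in unitmx]|)%nat.
Proof.
case: r => // r' _; rewrite -bin2_double expnD.
apply: (@leq_trans #|'GL_r'.+1[F]%g|).
  by rewrite card_GL // leq_mul // prod_expn_pred_ge ?card_finNzRing_gt1.
by rewrite cardsT card_sub; apply: eq_leq; apply: eq_card => M; rewrite !inE.
Qed.

Lemma card_rank_ge : (0 < r)%nat ->
  (#|F| ^ (r * r.-1 + 2 * (r * s)) <= #|[pred Z : 'M[F]_(r + s) | \rank Z == r]|)%nat.
Proof.
move=> r_gt0; apply: leq_trans card_rank_ge_unitmx.
by rewrite expnD leq_mul ?card_unitmx_ge // mulnC expnM.
Qed.

End RankDenominator.

Section LowWeightProbability.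
Local Open Scope R_scope.

Lemma INR_expn (a b : nat) : INR (a ^ b)%nat = INR a ^ b.
Proof. by elim: b => [|b IH]; rewrite ?expn0 // expnS -multE mult_INR IH. Qed.

Lemma INR_muln (a b : nat) : INR (a * b)%nat = INR a * INR b.
Proof. by rewrite -multE mult_INR. Qed.

Lemma INR_leq (a b : nat) : (a <= b)%nat -> INR a <= INR b.
Proof. by move/leP; apply: le_INR. Qed.

Lemma nat_floor (w : R) : 0 <= w -> exists k : nat, INR k <= w < INR k + 1.
Proof.
move=> w_ge0; have [up_gt up_le] := archimed w.
have up_pos : (0 < up w)%Z by apply: lt_0_IZR; lra.
exists (Z.to_nat (up w - 1)); rewrite INR_IZR_INZ Znat.Z2Nat.id; last lia.
by rewrite minus_IZR; lra.
Qed.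

Lemma Rpower_ge1 (q x : R) : 1 <= q -> 0 <= x -> 1 <= Rpower q x.
Proof. by move=> q_ge1 x_ge0; rewrite -(Rpower_O q); [apply: Rle_Rpower | lra]. Qed.

Lemma pow_Rpower (q x : R) (k : nat) : 0 < q -> Rpower q x ^ k = Rpower q (INR k * x).
Proof. by move=> q_gt0; rewrite -Rpower_pow ?Rpower_mult 1?Rmult_comm //; apply: exp_pos. Qed.

Lemma archimed_nat_gt1 (c b : R) : 0 < c -> exists2 m : nat, (1 < m)%nat & b <= c * INR m.
Proof.
move=> c_gt0; have [m0 m0_large] := INR_unbounded (b / c).
exists m0.+2 => //; rewrite !S_INR.
have := Rmult_lt_compat_r c _ _ c_gt0 m0_large.
by rewrite /Rdiv Rmult_assoc Rinv_l; [have := pos_INR m0; nra | lra].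
Qed.

Definition low_weight (F : finFieldType) (n : nat) (w : R) : {set 'rV[F]_n} :=
  [set v | Rleb (INR (weight v)) w].

Lemma card_low_weight_exp_le (F : finFieldType) (eps : R) : 0 < eps ->
  exists2 c', 0 < c' & forall n,
    INR #|low_weight F n (c' * INR n)| <= Rpower (INR #|F|) (eps * INR n / 2).
Proof.
move=> eps_gt0; set q := INR #|F|.
have F_gt1 : (1 < #|F|)%nat := card_finNzRing_gt1 F.
have q_gt1 : 1 < q by have := INR_leq F_gt1; rewrite /q /=; lra.
have lnq_gt0 : 0 < ln q by rewrite -ln_1; apply: ln_increasing; lra.
set a := Rpower q (eps / 4).
have a_gt1 : 1 < a by rewrite /a -(Rpower_O q); [apply: Rpower_lt | ]; lra.
(* Choosing [m] with [q - 1 <= (a - 1) m] makes the generating function gain at most [a] per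
   coordinate. *)
have [m m_gt1N m_large] := archimed_nat_gt1 (q - 1) (ltac:(lra) : 0 < a - 1).
have m_gt1 : 1 < INR m by have := lt_INR _ _ (ltP m_gt1N).
have lnm_gt0 : 0 < ln (INR m) by rewrite -ln_1; apply: ln_increasing; lra.
have m_spread : INR (m + #|F|.-1)%nat <= a * INR m.
  have : INR #|F|.-1.+1 = q by rewrite prednK // ltnW.
  by rewrite -plusE plus_INR S_INR; lra.
set c' := eps * ln q / (4 * ln (INR m)).
have c'_gt0 : 0 < c' by apply: Rdiv_lt_0_compat; nra.
exists c' => // n; set w := c' * INR n.
have w_ge0 : 0 <= w by apply: Rmult_le_pos; [lra | apply: pos_INR].
have [k [k_le_w w_lt_k1]] := nat_floor w_ge0.
have low_sub : low_weight F n w \subset [set v | (weight v <= k)%nat].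
  apply/subsetP => v; rewrite !inE /Rleb; case: Rle_dec => // wt_le _.
  by apply/ltnSE/ltP; apply: INR_lt; rewrite S_INR; lra.
have count := INR_leq (leq_trans (leq_mul (subset_leq_card low_sub) (leqnn _))
                                 (@card_low_weight_le F n m k (ltnW m_gt1N))).
rewrite !INR_muln !INR_expn in count; set W := INR #|_| in count *.
have mn_gt0 : 0 < INR m ^ n by apply: pow_lt; lra.
have W_le : W <= INR m ^ k * a ^ n.
  apply: (Rmult_le_reg_r (INR m ^ n)) => //; apply: Rle_trans count _.
  rewrite Rmult_assoc -Rpow_mult_distr; apply: Rmult_le_compat_l.
    by apply: pow_le; lra.
  by apply: pow_incr; split; [apply: pos_INR | exact: m_spread].
have mk_le : INR m ^ k <= Rpower q (eps * INR n / 4).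
  rewrite -Rpower_pow; last lra.
  apply: Rle_trans (Rle_Rpower _ _ _ (Rlt_le _ _ m_gt1) k_le_w) (Req_le _ _ _).
  by rewrite /Rpower /w /c'; congr exp; field; lra.
apply: Rle_trans W_le _; rewrite /a pow_Rpower; last lra.
rewrite -[eps * INR n / 2](_ : eps * INR n / 4 + INR n * (eps / 4) = _); last by field.
rewrite Rpower_plus; apply: Rmult_le_compat_r => //; left; exact: exp_pos.
Qed.

Lemma square_le_Rpower (q b A : R) : 1 < q -> 0 < b ->
  exists N0, forall x, N0 <= x -> A * x ^ 2 <= Rpower q (b * x).
Proof.
move=> q_gt1 b_gt0; set B := b * ln q.
have B_gt0 : 0 < B by apply: Rmult_lt_0_compat => //; rewrite -ln_1; apply: ln_increasing; lra.
exists (Rabs A * (3 / B) ^ 3) => x x_large.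
have x_ge0 : 0 <= x.
  apply: Rle_trans x_large; apply: Rmult_le_pos; first exact: Rabs_pos.
  by apply: pow_le; left; apply: Rdiv_lt_0_compat; lra.
(* [t <= exp t] for [t = B x / 3] gives [(B x / 3) ^ 3 <= exp (B x)]. *)
set t := B * x / 3; have t_ge0 : 0 <= t by rewrite /t; nra.
have cube_le : t ^ 3 <= Rpower q (b * x).
  rewrite /Rpower (_ : b * x * ln q = t + t + t); last by rewrite /t /B; field.
  have := exp_ineq1_le t; have : 0 <= t * t by nra.
  by rewrite !exp_plus /= Rmult_1_r -Rmult_assoc => ? ?; apply: Rmult_le_compat; nra.
have A_le : Rabs A <= x * (B / 3) ^ 3.
  rewrite -[Rabs A](_ : Rabs A * (3 / B) ^ 3 * (B / 3) ^ 3 = Rabs A); last by field; lra.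
  by apply: Rmult_le_compat_r x_large; apply: pow_le; lra.
apply: Rle_trans (Rmult_le_compat_r _ _ _ (pow2_ge_0 x) (Rle_abs A)) _.
apply: Rle_trans cube_le.
rewrite (_ : t ^ 3 = x ^ 2 * (x * (B / 3) ^ 3)); last by rewrite /t; field.
by rewrite Rmult_comm; apply: Rmult_le_compat_l (pow2_ge_0 x) A_le.
Qed.

Lemma prob_low_weight_le1 (D n r : nat) (w : R) : prob_low_weight D n r w <= 1.
Proof.
rewrite /prob_low_weight; set N := #|_|; set T := #|_|.
have N_le_T : (N <= T)%nat.
  by apply: subset_leq_card; apply/subsetP => Z; rewrite !inE => /andP[].
have [T0 | T_gt0] := posnP T.
  by move: N_le_T; rewrite T0 leqn0 => /eqP ->; rewrite /Rdiv Rmult_0_l; lra.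
have T_pos : 0 < INR T by apply: lt_0_INR; apply/ltP.
apply: (Rmult_le_reg_r (INR T)) => //.
by rewrite Rmult_1_l /Rdiv Rmult_assoc Rinv_l ?Rmult_1_r; [apply: INR_leq | lra].
Qed.

Lemma card_rank_low_weight_le (D n r : nat) (w : R) :
  (#|[pred Z : 'M['F_D]_n | (\rank Z == r) && weights_le Z w]|
   <= (n ^ 2 * #|low_weight 'F_D n w| ^ 2) ^ r)%nat.
Proof.
apply: leq_trans (@card_rank_weight_le _ n r (fun k => Rleb (INR k) w)); apply: eq_leq.
apply: eq_card => Z; rewrite !inE /weights_le /row_weight /col_weight.
by congr (_ && (_ && _)); apply: eq_forallb => i; congr (Rleb (INR _) w);
  apply: eq_card => j; rewrite !inE !mxE.
Qed.

Lemma prob_low_weight_le (D n r : nat) (w : R) : prime D -> (0 < r)%nat -> (r <= n)%nat ->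
  prob_low_weight D n r w <=
  (INR D * INR n ^ 2 * INR #|low_weight 'F_D n w| ^ 2) ^ r *
  Rpower (INR D) (INR r ^ 2 - 2 * INR n * INR r).
Proof.
move=> D_prime r_gt0 r_le_n.
have [s ->] : exists s, n = (r + s)%nat by exists (n - r)%nat; rewrite subnKC.
set q := INR D; have q_gt0 : 0 < q by apply: lt_0_INR; apply/ltP; apply: prime_gt0.
set W := INR #|low_weight _ _ w|; set x := INR (r + s).
have num := INR_leq (card_rank_low_weight_le D (r + s) r w).
have den := INR_leq (card_rank_ge 'F_D s r_gt0).
rewrite /prob_low_weight; set N := INR #|_| in num *; set T := INR #|_| in den *.
rewrite INR_expn INR_muln !INR_expn -/W -/x in num.
rewrite INR_expn card_Fp // -/q -Rpower_pow // in den.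
set e := INR _ in den.
have e_eq : e = INR r * (INR r - 1) + 2 * (INR r * INR s).
  rewrite /e -plusE plus_INR !INR_muln.
  have : INR r.-1.+1 = INR r by rewrite prednK.
  by rewrite S_INR => <- /=; ring.
apply: Rle_trans (_ : N * Rpower q (- e) <= _).
  rewrite Rpower_Ropp /Rdiv; apply: Rmult_le_compat_l; first exact: pos_INR.
  by apply: Rinv_le_contravar => //; apply: exp_pos.
rewrite Rmult_assoc Rpow_mult_distr -Rpower_pow //.
rewrite [Rpower q (INR r) * _]Rmult_comm Rmult_assoc -Rpower_plus.
apply: Rmult_le_compat => //; [exact: pos_INR | left; exact: exp_pos |].
by apply: Req_le; congr Rpower; rewrite e_eq /x plus_INR; ring.
Qed.

Lemma prob_low_weight_le_Rpower (D n r : nat) (w eps : R) :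
  prime D -> (0 < r)%nat -> (r <= n)%nat ->
  INR #|low_weight 'F_D n w| <= Rpower (INR D) (eps * INR n / 2) ->
  INR D * INR n ^ 2 <= Rpower (INR D) (eps * INR n) ->
  prob_low_weight D n r w <= Rpower (INR D) (INR r ^ 2 - 2 * (1 - eps) * INR n * INR r).
Proof.
move=> D_prime r_gt0 r_le_n low_le square_le.
set q := INR D in low_le square_le *.
have q_gt0 : 0 < q by apply: lt_0_INR; apply/ltP; apply: prime_gt0.
apply: Rle_trans (prob_low_weight_le w D_prime r_gt0 r_le_n) _; rewrite -/q.
set W := INR #|_| in low_le *.
have base_le : q * INR n ^ 2 * W ^ 2 <= Rpower q (2 * eps * INR n).
  rewrite (_ : 2 * eps * INR n = eps * INR n + eps * INR n); last ring.
  rewrite Rpower_plus; apply: Rmult_le_compat => //; try nra.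
  apply: Rle_trans (pow_incr _ _ 2 (conj (pos_INR _) low_le)) _.
  by rewrite pow_Rpower; [apply: Req_le; congr Rpower; rewrite /=; field | lra].
apply: Rle_trans (_ : Rpower q (2 * eps * INR n) ^ r *
                      Rpower q (INR r ^ 2 - 2 * INR n * INR r) <= _).
  apply: Rmult_le_compat_r; first by left; apply: exp_pos.
  apply: pow_incr; split => //.
  by apply: Rmult_le_pos; [apply: Rmult_le_pos; [lra | apply: pow2_ge_0] | apply: pow2_ge_0].
by rewrite pow_Rpower // -Rpower_plus; apply: Req_le; congr Rpower; ring.
Qed.

End LowWeightProbability.

Theorem lemma9 (D : nat) (hD : prime D) (hodd : odd D) :
  forall eps : R, (0 < eps)%R ->
  exists c' : R, (0 < c')%R /\
  exists C : R, (0 < C)%R /\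
  forall n' r : nat, (1 <= r)%N -> (r <= n')%N ->
    (prob_low_weight D n' r (c' * INR n')
     <= C * Rpower (INR D) (INR r ^ 2 - 2 * (1 - eps) * INR n' * INR r))%R.
Proof.
move=> eps eps_gt0; set q := INR D.
have q_gt1 : (1 < q)%R by have := INR_leq (prime_gt1 hD); rewrite /q /=; lra.
have [c' c'_gt0 low_le] := card_low_weight_exp_le 'F_D eps_gt0.
rewrite card_Fp // -/q in low_le.
have [N0 square_le] := @square_le_Rpower q eps q q_gt1 eps_gt0.
exists c'; split => //; exists (Rpower q (2 * N0 ^ 2)); split; first exact: exp_pos.
move=> n r r_gt0 r_le_n; set E := (INR r ^ 2 - _)%R.
have [n_small | n_large] := Rlt_le_dec (INR n) N0.
  apply: Rle_trans (prob_low_weight_le1 _ _ _ _) _.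
  rewrite -Rpower_plus; apply: Rpower_ge1; first lra.
  have r_le_nR := INR_leq r_le_n; have r_ge0 := pos_INR r; have n_ge0 := pos_INR n.
  have nr_le : (INR n * INR r <= N0 * N0)%R by apply: Rmult_le_compat; lra.
  have := Rmult_le_pos _ _ (Rlt_le _ _ eps_gt0) (Rmult_le_pos _ _ n_ge0 r_ge0).
  by have := Rmult_le_pos _ _ r_ge0 r_ge0; rewrite /E /=; nra.
have := prob_low_weight_le_Rpower hD r_gt0 r_le_n (low_le n) (square_le _ n_large).
move/Rle_trans; apply.
rewrite -[X in (X <= _)%R]Rmult_1_l; apply: Rmult_le_compat_r; first by left; apply: exp_pos.
by apply: Rpower_ge1; [lra | apply: Rmult_le_pos; [lra | apply: pow2_ge_0]].
Qed.
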